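(* Up to multiplication by a positive integer, every basic weight of a basic system of type $C$ is one of the following (coordinates $\lambda_k=\langle\lambda,e_k\rangle$): (1) $(C_2,1,1)$: $(0,1)$; (2) $(C_2,1,2)$: $(1,1)$, $(-1,1)$; (3) $(C_2,2,1)$: $(1,0)$, $(0,-1)$; (4) $(C_2,2,2)$: $(1,-1)$; (5) $(C_3,2,2)$: $(1,0,1)$, $(0,-1,1)$; (6) $(C_3,2,3)$: $(1,-1,1)$; (7) $(C_3,3,2)$: $(1,0,-1)$; (8) $(C_4,3,3)$: $(1,0,-1,1)$.
   Context: $C_n$ is realized in $\mathbb R^n$ with orthonormal basis $e_1,\dots,e_n$ and standard inner product, simple roots $\alpha_k=e_k-e_{k+1}$ ($k<n$), $\alpha_n=2e_n$. Let $W$ be the Weyl group, $\alpha^\vee=2\alpha/\langle\alpha,\alpha\rangle$. A weight is integral if $\langle\lambda,\alpha^\vee\rangle\in\mathbb Z$ for all roots $\alpha$; $\overline\lambda$ is the dominant weight in $W\lambda$. For $I=\Delta\setminus\{\alpha_i\}$, $J=\Delta\setminus\{\alpha_j\}$, a basic weight of $(\Phi,i,j)$ is an integral $\lambda$ with $\langle\lambda,\alpha^\vee\rangle\in\mathbb Z_{>0}$ for all $\alpha\in I$ and $\{\alpha\in\Delta:\langle\overline\lambda,\alpha\rangle=0\}=J$; $(\Phi,i,j)$ is a basic system if it has a basic weight. *)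

From HB Require Import structures.
From mathcomp Require Import all_boot all_order all_algebra.
Set Implicit Arguments. Unset Strict Implicit. Unset Printing Implicit Defensive.
Import Order.TTheory GRing.Theory Num.Theory.
Local Open Scope ring_scope.

Section CnDefs.
Variable R : realFieldType.
Variable n : nat.

(* standard basis vector e_k (0-indexed: e k is e_{k+1} of the paper) *)
Definition ebase (k : nat) : 'rV[R]_n := \row_(l < n) (if val l == k then 1 else 0).

Definition dotv (u v : 'rV[R]_n) : R := \sum_(l < n) u 0 l * v 0 l.

Definition is_root (a : 'rV[R]_n) : Prop :=
  (exists (p q : nat) (s t : bool), (p < n)%N /\ (q < n)%N /\ p <> q /\
      a = (-1) ^+ s *: ebase p + (-1) ^+ t *: ebase q)
  \/ (exists (p : nat) (s : bool), (p < n)%N /\ a = (-1) ^+ s *: (2%:R *: ebase p)).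

Definition coroot (a : 'rV[R]_n) : 'rV[R]_n := (2%:R / dotv a a) *: a.

(* simple roots alpha_k, k = 1..n (paper indexing):
   alpha_k = e_k - e_{k+1} for k < n, alpha_n = 2 e_n *)
Definition simple_root (k : nat) : 'rV[R]_n :=
  if (k < n)%N then ebase k.-1 - ebase k else 2%:R *: ebase k.-1.

Definition is_int (x : R) : Prop := exists z : int, x = z%:~R.
Definition is_posint (x : R) : Prop := exists m : nat, (0 < m)%N /\ x = m%:R.

Definition integral (l : 'rV[R]_n) : Prop :=
  forall a, is_root a -> is_int (dotv l (coroot a)).

Definition reflect_root (a x : 'rV[R]_n) : 'rV[R]_n := x - dotv x (coroot a) *: a.

(* W-orbit: W is the group generated by the reflections s_a, a a root
   (each s_a is an involution, so W = finite products of reflections). *)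
Inductive in_orbit (l : 'rV[R]_n) : 'rV[R]_n -> Prop :=
| orbit_refl : in_orbit l l
| orbit_step : forall a x, is_root a -> in_orbit l x -> in_orbit l (reflect_root a x).

Definition dominant (m : 'rV[R]_n) : Prop :=
  forall k, (1 <= k <= n)%N -> 0 <= dotv m (simple_root k).

(* basic weight of (C_n, i, j), with I = Delta \ {alpha_i}, J = Delta \ {alpha_j}.
   \bar l is the (unique) dominant element of W l. *)
Definition basic_weight (i j : nat) (l : 'rV[R]_n) : Prop :=
  integral l /\
  (forall k, (1 <= k <= n)%N -> k <> i -> is_posint (dotv l (coroot (simple_root k)))) /\
  (exists m, in_orbit l m /\ dominant m /\
     forall k, (1 <= k <= n)%N -> (dotv m (simple_root k) = 0 <-> k <> j)).

Definition vec (s : seq R) : 'rV[R]_n := \row_(l < n) nth 0 s l.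

Definition listed (i j : nat) (s : seq R) : Prop :=
  [/\ n = 2%N, i = 1%N, j = 1%N & s = [:: 0; 1]]
  \/ ([/\ n = 2%N, i = 1%N & j = 2%N] /\ (s = [:: 1; 1] \/ s = [:: -1; 1]))
  \/ ([/\ n = 2%N, i = 2%N & j = 1%N] /\ (s = [:: 1; 0] \/ s = [:: 0; -1]))
  \/ [/\ n = 2%N, i = 2%N, j = 2%N & s = [:: 1; -1]]
  \/ ([/\ n = 3%N, i = 2%N & j = 2%N] /\ (s = [:: 1; 0; 1] \/ s = [:: 0; -1; 1]))
  \/ [/\ n = 3%N, i = 2%N, j = 3%N & s = [:: 1; -1; 1]]
  \/ [/\ n = 3%N, i = 3%N, j = 2%N & s = [:: 1; 0; -1]]
  \/ [/\ n = 4%N, i = 3%N, j = 3%N & s = [:: 1; 0; -1; 1]].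

End CnDefs.

(* The dominant element of the W-orbit of a basic weight l of (C_n, i, j) pairs
   to zero exactly with the simple roots other than alpha_j, so it is
   a (e_1 + ... + e_j) with a > 0.  The reflections act on coordinates by signed
   permutations, hence every l_k lies in {0, a, -a}, exactly j of them are
   nonzero, and integrality makes a a positive integer.  Writing l = a s with
   s_k in {1, 0, -1}, positivity of <l, alpha_k^v> = l_k - l_(k+1) for k <> i
   (with l_(n+1) = 0) says that s strictly decreases except at position i.  A
   strictly decreasing sign sequence is a subsequence of (1, 0, -1), and the
   part after position i, which stays above l_(n+1) = 0, is a subsequence of
   (1); the finitely many such sequences are exactly the listed ones. *)

From Pilot Require Import Defs.
From HB Require Import structures.
From mathcomp Require Import all_boot all_order all_algebra perm.
From mathcomp Require Import ring zify.
Set Implicit Arguments. Unset Strict Implicit. Unset Printing Implicit Defensive.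
Import Order.TTheory GRing.Theory Num.Theory.
Local Open Scope ring_scope.

Section Coordinates.
Variables (R : realFieldType) (n : nat).
Local Notation e := (ebase R n).
Implicit Types x y : 'rV[R]_n.

(* [ecoord x k] is the paper's l_(k+1); it vanishes for [k >= n], which supplies
   the convention l_(n+1) = 0 and makes [coroot_simple_root] uniform in [k]. *)
Definition ecoord x k := dotv x (e k).

Lemma ebaseE p (k : 'I_n) : e p 0 k = ((k : nat) == p)%:R.
Proof. by rewrite mxE; case: eqP. Qed.

Lemma ebase_out p : (n <= p)%N -> e p = 0.
Proof.
move=> np; apply/rowP => k; rewrite ebaseE mxE.
by rewrite (_ : (k : nat) == p = false) //; apply/negbTE; rewrite neq_ltn (leq_trans _ np).
Qed.

Lemma dotvC x y : dotv x y = dotv y x.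
Proof. by apply: eq_bigr => k _; rewrite mulrC. Qed.

Lemma dotvDr x y z : dotv x (y + z) = dotv x y + dotv x z.
Proof. by rewrite /dotv -big_split; apply: eq_bigr => k _; rewrite mxE mulrDr. Qed.

Lemma dotvZr x c y : dotv x (c *: y) = c * dotv x y.
Proof. by rewrite /dotv mulr_sumr; apply: eq_bigr => k _; rewrite mxE mulrCA. Qed.

Lemma dotvNr x y : dotv x (- y) = - dotv x y.
Proof. by rewrite -scaleN1r dotvZr mulN1r. Qed.

Lemma dotvBr x y z : dotv x (y - z) = dotv x y - dotv x z.
Proof. by rewrite dotvDr dotvNr. Qed.

Lemma dotvDl x y z : dotv (x + y) z = dotv x z + dotv y z.
Proof. by rewrite dotvC dotvDr !(dotvC z). Qed.

Lemma dotvBl x y z : dotv (x - y) z = dotv x z - dotv y z.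
Proof. by rewrite dotvC dotvBr !(dotvC z). Qed.

Lemma dotvZl c x y : dotv (c *: x) y = c * dotv x y.
Proof. by rewrite dotvC dotvZr dotvC. Qed.

Lemma ecoord_ord x (k : 'I_n) : ecoord x k = x 0 k.
Proof.
rewrite /ecoord /dotv (bigD1 k) //= big1 => [|p pk].
  by rewrite ebaseE eqxx mulr1 addr0.
by rewrite ebaseE val_eqE (negbTE pk) mulr0.
Qed.

Lemma ecoordE x p (pn : (p < n)%N) : ecoord x p = x 0 (Ordinal pn).
Proof. exact: (ecoord_ord x (Ordinal pn)). Qed.

Lemma ecoord_out x p : (n <= p)%N -> ecoord x p = 0.
Proof.
move=> np; rewrite /ecoord ebase_out // /dotv big1 // => k _.
by rewrite mxE mulr0.
Qed.

Lemma dotv_ebase p q : (p < n)%N -> dotv (e p) (e q) = (p == q)%:R.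
Proof. by move=> pn; rewrite dotvC -/(ecoord _ p) ecoordE ebaseE. Qed.

End Coordinates.

Section Roots.
Variables (R : realFieldType) (n : nat).
Local Notation e := (ebase R n).
Local Notation alpha := (simple_root R n).
Implicit Types x a m : 'rV[R]_n.

Lemma corootZ c a : c != 0 -> coroot (c *: a) = c^-1 *: coroot a.
Proof.
move=> c0; rewrite /coroot dotvZl dotvZr !scalerA !invfM; congr (_ *: _).
transitivity ((c^-1 * c) * (c^-1 * (2%:R / dotv a a))); first by ring.
by rewrite mulVf ?mul1r.
Qed.

Lemma coroot_long_root p : (p < n)%N -> coroot (2%:R *: e p) = e p.
Proof.
move=> pn; rewrite corootZ ?pnatr_eq0 // /coroot dotv_ebase // eqxx scalerA.
by rewrite divr1 mulVf ?pnatr_eq0 // scale1r.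
Qed.

Lemma is_root_long p : (p < n)%N -> is_root (2%:R *: e p).
Proof. by move=> pn; right; exists p, false; rewrite scale1r. Qed.

Lemma coroot_simple_root k : (0 < k <= n)%N -> coroot (alpha k) = e k.-1 - e k.
Proof.
case/andP=> k_gt0; rewrite leq_eqVlt => /orP[/eqP kn | kn].
  subst k; rewrite /simple_root ltnn coroot_long_root ?ltn_predL //.
  by rewrite (ebase_out R (leqnn n)) subr0.
have d2 : dotv (e k.-1 - e k) (e k.-1 - e k) = 2%:R.
  have k1k : (k.-1 == k) = false by lia.
  have k1n : (k.-1 < n)%N by lia.
  rewrite !dotvBl !dotvBr !dotv_ebase // !eqxx k1k eq_sym k1k.
  by rewrite subr0 sub0r opprK.
by rewrite /simple_root kn /coroot d2 divff ?pnatr_eq0 // scale1r.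
Qed.

Lemma dotv_coroot_simple_root x k : (0 < k <= n)%N ->
  dotv x (coroot (alpha k)) = ecoord x k.-1 - ecoord x k.
Proof. by move=> k_range; rewrite coroot_simple_root // dotvBr. Qed.

Lemma dotv_simple_root x k : (0 < k <= n)%N ->
  dotv x (alpha k) = (if (k < n)%N then 1 else 2%:R) * (ecoord x k.-1 - ecoord x k).
Proof.
case/andP=> _ kn; rewrite /simple_root; case: ifP => [_ | /negbT]; first by rewrite mul1r dotvBr.
by rewrite -leqNgt => nk; rewrite dotvZr (ecoord_out x nk) subr0.
Qed.

Lemma integral_ecoord_norm (l : 'rV[R]_n) k : integral l -> (k < n)%N ->
  exists c : nat, `|ecoord l k| = c%:R.
Proof.
move=> l_int kn; have [z ->] : is_int (ecoord l k).
  by rewrite /ecoord -(coroot_long_root kn); exact/l_int/is_root_long.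
by exists `|z|%N; rewrite natr_absz intr_norm.
Qed.

Lemma dominant_fundamental_multiple m j : (0 < j <= n)%N -> dominant m ->
  (forall k, (0 < k <= n)%N -> dotv m (alpha k) = 0 <-> k <> j) ->
  exists2 a, 0 < a & forall k, ecoord m k = if (k < j)%N then a else 0.
Proof.
move=> j_range m_dom m_zero; case/andP: (j_range) => _ j_le_n; set M := ecoord m.
have factor_gt0 k : 0 < (if (k < n)%N then 1 else 2%:R : R) by case: ifP.
have flat k : (0 < k <= n)%N -> k != j -> M k.-1 = M k.
  move=> k_range /eqP kj; apply/eqP; rewrite -subr_eq0.
  move: ((m_zero k k_range).2 kj); rewrite dotv_simple_root // => /eqP.
  by rewrite mulf_eq0 gt_eqF.
exists (M j.-1 - M j).
  have := m_dom j j_range; rewrite dotv_simple_root // pmulr_rge0 // le_eqVlt.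
  case/orP => // /eqP M0; case: ((m_zero j j_range).1 _ erefl).
  by rewrite dotv_simple_root // -M0 mulr0.
suff shape d k : (k + d = n)%N -> M k = if (k < j)%N then M j.-1 - M j else 0.
  move=> k; case: (leqP k n) => [kn | nk]; first exact: (shape (n - k)%N k (subnKC kn)).
  by rewrite /M (ecoord_out m (ltnW nk)) ltnNge (leq_trans j_le_n (ltnW nk)).
elim: d k => [|d IH] k; first by rewrite addn0 => ->; rewrite /M ecoord_out // ltnNge j_le_n.
move=> kd; have := IH k.+1; rewrite addSnnS => /(_ kd).
case: (eqVneq k.+1 j) => [<- | kj]; first by rewrite ltnn ltnSn => ->; rewrite subr0.
have k_range : (0 < k.+1 <= n)%N by rewrite -kd -addSnnS leq_addr.
by move=> Mk1; rewrite (flat k.+1) // Mk1 [(k < j)%N]leq_eqVlt (negbTE kj).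
Qed.

End Roots.

Section Reflections.
Variables (R : realFieldType) (n : nat).
Local Notation e := (ebase R n).
Implicit Types x y l a : 'rV[R]_n.

Lemma reflect_rootZ c a x : c != 0 -> reflect_root (c *: a) x = reflect_root a x.
Proof.
move=> c0; rewrite /reflect_root corootZ // dotvZr scalerA mulrAC mulVf //.
by rewrite mul1r.
Qed.

Lemma reflect_rootE a x k : reflect_root a x 0 k = x 0 k - dotv x (coroot a) * a 0 k.
Proof. by rewrite !mxE. Qed.

Lemma reflect_root_pair_abs p q (b : bool) x :
  (p < n)%N -> (q < n)%N -> p != q ->
  exists s : 'S_n, forall k,
    `|reflect_root (e p + (-1) ^+ b *: e q) x 0 k| = `|x 0 (s k)|.
Proof.
move=> pn qn /negbTE pq; have qp : (q == p) = false by rewrite eq_sym pq.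
set eta : R := (-1) ^+ b; set a := e p + eta *: e q.
have eta2 : eta * eta = 1 by rewrite -expr2 sqrr_sign.
have a_entry (k : 'I_n) : a 0 k = (p == k)%:R + eta * (q == k)%:R.
  by rewrite -ecoord_ord /ecoord dotvDl dotvZl !dotv_ebase.
have coroot_a : coroot a = a.
  rewrite /coroot dotvDl !dotvDr !dotvZl !dotvZr !dotv_ebase // !eqxx.
  by rewrite qp pq !mulr0 !addr0 add0r mulr1 eta2 divff ?scale1r // pnatr_eq0.
have x_a : dotv x a = x 0 (Ordinal pn) + eta * x 0 (Ordinal qn).
  by rewrite dotvDr dotvZr -!ecoordE.
exists (tperm (Ordinal pn) (Ordinal qn)) => k.
rewrite reflect_rootE coroot_a x_a a_entry.
have norm_eta (y : R) : `|- (eta * y)| = `|y| by rewrite normrN normrM normr_sign mul1r.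
case: tpermP => [-> | -> | /eqP kp /eqP kq].
- rewrite /= eqxx qp mulr0 addr0 mulr1 opprD addrA subrr add0r.
  exact: norm_eta.
- rewrite /= eqxx pq add0r mulr1.
  have -> : x 0 (Ordinal qn) - (x 0 (Ordinal pn) + eta * x 0 (Ordinal qn)) * eta
          = - (eta * x 0 (Ordinal pn)) + (1 - eta * eta) * x 0 (Ordinal qn) by ring.
  by rewrite eta2 subrr mul0r addr0 norm_eta.
- have /negbTE -> : p != k by apply: contra kp => /eqP pk; apply/eqP/val_inj.
  have /negbTE -> : q != k by apply: contra kq => /eqP qk; apply/eqP/val_inj.
  by rewrite mulr0 addr0 mulr0 subr0.
Qed.

Lemma reflect_root_long_abs p x : (p < n)%N ->
  forall k, `|reflect_root (2%:R *: e p) x 0 k| = `|x 0 k|.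
Proof.
move=> pn k; rewrite reflect_rootE coroot_long_root // -(ecoord_ord (2%:R *: e p)).
rewrite /ecoord dotvZl dotv_ebase // -/(ecoord x p) (ecoordE x pn).
case: eqP => [pk | _]; last by rewrite !mulr0 subr0.
have -> : Ordinal pn = k by apply: val_inj.
by rewrite mulr1 (_ : _ - _ = - x 0 k) ?normrN //; ring.
Qed.

Lemma reflect_root_abs a x : is_root a ->
  exists s : 'S_n, forall k, `|reflect_root a x 0 k| = `|x 0 (s k)|.
Proof.
case=> [[p [q [s [t [pn [qn [pq ->]]]]]]] | [p [s [pn ->]]]].
  have -> : (-1) ^+ s *: e p + (-1) ^+ t *: e q
          = (-1) ^+ s *: (e p + (-1) ^+ (s (+) t) *: e q).
    by rewrite scalerDr scalerA -signr_addb addKb.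
  by rewrite reflect_rootZ ?signr_eq0 //; apply: reflect_root_pair_abs => //; apply/eqP.
rewrite reflect_rootZ ?signr_eq0 //; exists 1%g => k.
by rewrite perm1 reflect_root_long_abs.
Qed.

Lemma perm_map_perm_enum (s : 'S_n) : perm_eq [seq s k | k <- enum 'I_n] (enum 'I_n).
Proof.
apply: uniq_perm => [||k]; last by rewrite mem_enum -[k](permKV s) map_f ?mem_enum.
  by rewrite (map_inj_uniq (@perm_inj _ s)) enum_uniq.
exact: enum_uniq.
Qed.

Definition abs_coords x := [seq `|x 0 k| | k <- enum 'I_n].

Lemma abs_coords_perm x y (s : 'S_n) :
  (forall k, `|y 0 k| = `|x 0 (s k)|) -> perm_eq (abs_coords y) (abs_coords x).
Proof.
move=> yx; rewrite /abs_coords (eq_map yx) (map_comp (fun k => `|x 0 k|) s).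
exact/perm_map/perm_map_perm_enum.
Qed.

Lemma in_orbit_abs_coords l x : Defs.in_orbit l x -> perm_eq (abs_coords x) (abs_coords l).
Proof.
elim=> [|a y a_root _ IH]; first exact: perm_refl.
have [s refl_s] := reflect_root_abs y a_root.
exact: perm_trans (abs_coords_perm refl_s) IH.
Qed.

End Reflections.

Lemma irr_sorted_subseq (T : eqType) (leT : rel T) (s t : seq T) :
  transitive leT -> irreflexive leT ->
  sorted leT s -> sorted leT t -> {subset s <= t} -> subseq s t.
Proof.
move=> leT_tr leT_irr s_sorted t_sorted st.
suff -> : s = [seq x <- t | x \in s] by apply: filter_subseq.
apply: irr_sorted_eq s_sorted (sorted_filter leT_tr _ t_sorted) _ => // x.
by rewrite mem_filter andb_idr //; apply: st.
Qed.

Lemma sorted_mkseq (T : Type) (leT : rel T) (f : nat -> T) m :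
  (forall k, (k.+1 < m)%N -> leT (f k) (f k.+1)) -> sorted leT (mkseq f m).
Proof.
move=> desc; apply/(sortedP (f 0%N)) => k; rewrite size_mkseq => km.
by rewrite !nth_mkseq ?desc // ltnW.
Qed.

Ltac solve_listed_case :=
  first [ by split | by split; [split | left] | by split; [split | right] ].
Ltac solve_listed :=
  rewrite /listed; repeat (first [left; solve_listed_case | right]); solve_listed_case.

Lemma listed_sign_patterns (R : realFieldType) (t d : seq int) :
  subseq t [:: 1; 0; -1] -> subseq d [:: 1] ->
  (0 < size t)%N -> (1 < size (t ++ d))%N ->
  listed (size (t ++ d)) (size t) (count (predC1 0) (t ++ d))
         [seq x%:~R : R | x <- t ++ d].
Proof.
move=> /subseqP[mt + ->] /subseqP[md + ->].
case: mt => [|b1 [|b2 [|b3 []]]] //= _; case: md => [|b []] //= _.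
by case: b1; case: b2; case: b3; case: b => //= _ _; solve_listed.
Qed.

Lemma listed_of_signs (R : realFieldType) (f : nat -> int) n i :
  (1 < n)%N -> (0 < i <= n)%N -> (forall k, f k \in [:: 1; 0; -1]) -> f n = 0 ->
  (forall k, (k < n)%N -> k.+1 != i -> f k.+1 < f k) ->
  listed n i (count (predC1 0) (mkseq f n)) [seq x%:~R : R | x <- mkseq f n].
Proof.
move=> n_gt1 /andP[i_gt0 i_le_n] f_sign fn0 desc.
have pos_tail m k : (i <= k)%N -> (k + m = n.-1)%N -> 0 < f k.
  elim: m k => [|m IH] k ik km.
    by rewrite -fn0 (_ : n = k.+1) ?desc //; lia.
  by apply: lt_trans (IH k.+1 _ _) (desc k _ _); lia.
set t := mkseq f i; set d := mkseq (fun k => f (i + k)%N) (n - i).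
have -> : mkseq f n = t ++ d.
  rewrite /t /d /mkseq -{1}(subnKC i_le_n) iotaD map_cat add0n.
  by rewrite -[in iota i](addn0 i) iotaDl -map_comp.
have t_sub : subseq t [:: 1; 0; -1].
  apply: irr_sorted_subseq (rev_trans lt_trans) ltxx _ _ _ => // [|x /mapP[k _ ->] //].
  by apply: sorted_mkseq => k ki; apply: desc; lia.
have d_sub : subseq d [:: 1].
  apply: irr_sorted_subseq (rev_trans lt_trans) ltxx _ _ _ => //.
    by apply: sorted_mkseq => k ki /=; rewrite addnS desc //; lia.
  move=> x /mapP[k]; rewrite mem_iota => /andP[_ kni] ->.
  have := pos_tail (n.-1 - (i + k))%N (i + k)%N (leq_addr _ _) ltac:(lia).
  by have := f_sign (i + k)%N; rewrite !inE => /or3P[] /eqP ->; lia.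
have := listed_sign_patterns R t_sub d_sub.
by rewrite size_cat !size_mkseq subnKC //; apply.
Qed.

Section SignVectors.
Variables (R : realFieldType) (n : nat).
Implicit Types l m : 'rV[R]_n.

Lemma eq_mul_sgz (a x : R) : `|x| \in [:: 0; a] -> x = a * (sgz x)%:~R.
Proof.
rewrite !inE => /orP[/eqP/normr0_eq0 -> | /eqP x_a]; first by rewrite sgz0 mulr0.
by rewrite -x_a -sgrEz mulrC -numEsg.
Qed.

Lemma lt_sgz (a x y : R) : 0 < a -> `|x| \in [:: 0; a] -> `|y| \in [:: 0; a] ->
  y < x -> sgz y < sgz x.
Proof.
move=> a_gt0 x_abs y_abs.
rewrite [X in X < _ -> _](eq_mul_sgz y_abs) [X in _ < X -> _](eq_mul_sgz x_abs).
by rewrite ltr_pM2l // ltr_int.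
Qed.

Lemma vec_sgz l a : (forall k, `|ecoord l k| \in [:: 0; a]) ->
  l = a *: vec n [seq x%:~R | x <- mkseq (fun k => sgz (ecoord l k)) n].
Proof.
move=> l_abs; apply/rowP => k; rewrite !mxE (nth_map 0) ?size_mkseq // nth_mkseq //.
by rewrite -ecoord_ord; exact: eq_mul_sgz.
Qed.

Lemma orbit_fundamental_coords l m a j : (j <= n)%N -> 0 < a -> Defs.in_orbit l m ->
  (forall k, ecoord m k = if (k < j)%N then a else 0) ->
  (forall k, `|ecoord l k| \in [:: 0; a]) /\
  count (predC1 0) (mkseq (fun k => sgz (ecoord l k)) n) = j.
Proof.
move=> j_le_n a_gt0 l_m m_shape; have lm := in_orbit_abs_coords l_m.
have m_abs : abs_coords m = [seq if (k < j)%N then a else 0 | k : 'I_n <- enum 'I_n].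
  apply: eq_map => k; rewrite -ecoord_ord m_shape.
  by case: ifP; rewrite ?normr0 ?gtr0_norm.
split=> [k|].
  have [kn | nk] := ltnP k n; last by rewrite ecoord_out // normr0 mem_head.
  have : `|l 0 (Ordinal kn)| \in abs_coords l by apply/mapP; exists (Ordinal kn); rewrite ?mem_enum.
  rewrite -ecoordE -(perm_mem lm) m_abs => /mapP[k' _ ->].
  by case: ifP; rewrite !inE eqxx ?orbT.
transitivity (count (predC1 0) (abs_coords l)).
  rewrite /mkseq -val_enum_ord -map_comp !count_map; apply: eq_count => k /=.
  by rewrite ecoord_ord sgz_eq0 normr_eq0.
have /seq.permP lm_count := lm.
rewrite -lm_count m_abs count_map -[RHS](size_iota 0) -(filter_iota_ltn 0 j_le_n).
rewrite size_filter -val_enum_ord count_map; apply: eq_count => k /=.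
by case: ifP; rewrite ?eqxx ?gt_eqF.
Qed.

End SignVectors.

Theorem theorem5p9 (R : realFieldType) (n i j : nat) (l : 'rV[R]_n) :
  (2 <= n)%N -> (1 <= i <= n)%N -> (1 <= j <= n)%N ->
  basic_weight i j l ->
  exists (c : nat) (s : seq R), (0 < c)%N /\ listed n i j s /\ l = c%:R *: vec n s.
Proof.
move=> n_gt1 i_range j_range [l_int [l_pos [m [l_m [m_dom m_zero]]]]].
have [a a_gt0 m_shape] := dominant_fundamental_multiple j_range m_dom m_zero.
have /andP[j_gt0 j_le_n] := j_range.
have [l_abs l_count] := orbit_fundamental_coords j_le_n a_gt0 l_m m_shape.
set f := fun k => sgz (ecoord l k).
have [c a_c] : exists c : nat, a = c%:R.
  have [k kn lk0] : exists2 k, (k < n)%N & ecoord l k != 0.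
    have : has (predC1 0) (mkseq f n) by rewrite has_count l_count.
    by case/hasP=> x /mapP[k]; rewrite mem_iota => /andP[_ kn] -> /=; rewrite sgz_eq0; exists k.
  have [c lc] := integral_ecoord_norm l_int kn; exists c; rewrite -lc.
  by move: (l_abs k); rewrite !inE normr_eq0 (negbTE lk0) => /eqP.
exists c, [seq x%:~R | x <- mkseq f n]; split; first by rewrite -(ltr0n R) -a_c.
split; last by rewrite -a_c; apply: vec_sgz.
rewrite -l_count; apply: listed_of_signs => // [k | | k kn /eqP ki].
- by rewrite /f; case: sgzP.
- by rewrite /f ecoord_out ?sgz0.
- apply: (lt_sgz a_gt0 (l_abs _) (l_abs _)); rewrite -subr_gt0.
  have [p [p_gt0]] := l_pos k.+1 kn ki.
  by rewrite dotv_coroot_simple_root // => ->; rewrite ltr0n.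
Qed.
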